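(* Let $(G,N,\vartheta)$ and $(H,M,\varphi)$ be character triples of finite groups with $(G,N,\vartheta)\geq_c(H,M,\varphi)$ via the pair $(\mathcal{P},\mathcal{P}')$. Let $N\leq J\leq G$ and let $\sigma_J:\mathrm{Irr}(J\mid\vartheta)\to\mathrm{Irr}(J\cap H\mid\varphi)$ be the $\mathbf{N}_H(J)$-equivariant bijection associated with $(\mathcal{P},\mathcal{P}')$. Then $$\left(\mathbf{N}_G(J)_\psi,J,\psi\right)\geq_c\left(\mathbf{N}_H(J)_\psi,J\cap H,\sigma_J(\psi)\right)$$ for every $\psi\in\mathrm{Irr}(J\mid\vartheta)$.
   Context: Character triples and $\geq_c$: a character triple $(G,N,\vartheta)$ consists of $N\trianglelefteq G$ and a $G$-invariant $\vartheta\in\mathrm{Irr}(N)$. A projective representation of $G$ associated with $\vartheta$ is a map $\mathcal{P}:G\to\mathrm{GL}_{\vartheta(1)}(\mathbb{C})$ with $\mathcal{P}(x)\mathcal{P}(y)=\alpha(x,y)\mathcal{P}(xy)$ for a factor set $\alpha$, such that $\mathcal{P}|_N$ is a representation affording $\vartheta$ and $\mathcal{P}(xn)=\mathcal{P}(x)\mathcal{P}(n)$, $\mathcal{P}(nx)=\mathcal{P}(n)\mathcal{P}(x)$ for $x\in G,n\in N$. One writes $(G,N,\vartheta)\geq_c(H,M,\varphi)$ via $(\mathcal{P},\mathcal{P}')$ if $G=NH$, $M=N\cap H$, $\mathbf{C}_G(N)\leq H$, $\mathcal{P}$ is a projective representation of $G$ associated with $\vartheta$ and $\mathcal{P}'$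 one of $H$ associated with $\varphi$, with factor sets $\alpha,\alpha'$ satisfying $\alpha|_{H\times H}=\alpha'$, and for every $c\in\mathbf{C}_G(N)$ the matrices $\mathcal{P}(c)$, $\mathcal{P}'(c)$ are scalar with the same scalar. The bijection $\sigma_J$ associated with $(\mathcal{P},\mathcal{P}')$: every $\psi\in\mathrm{Irr}(J\mid\vartheta)$ is afforded by $\mathcal{P}|_J\otimes\mathcal{Q}$ for some irreducible projective representation $\mathcal{Q}$ of $J$ that is constant on cosets of $N$ (with factor set inverse to that of $\mathcal{P}|_J$); then $\sigma_J(\psi)$ is the character afforded by $\mathcal{P}'|_{J\cap H}\otimes\mathcal{Q}|_{J\cap H}$. This is a well-defined $\mathbf{N}_H(J)$-equivariant bijection $\mathrm{Irr}(J\mid\vartheta)\to\mathrm{Irr}(J\cap H\mid\varphi)$. Subscripts such as $\mathbf{N}_G(J)_\psi$ denote stabilizers. *)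

From HB Require Import structures.
From mathcomp Require Import all_boot all_order all_algebra all_fingroup all_solvable.
From mathcomp Require Import all_field all_character.
From mathcomp Require Import inertia mxtens.
Set Implicit Arguments.
Unset Strict Implicit.
Unset Printing Implicit Defensive.
Import GRing.Theory Num.Theory.
Local Open Scope ring_scope.

Section CharTriples.
Variable gT : finGroupType.

Definition proj_repr (G : {set gT}) (n : nat) (P : gT -> 'M[algC]_n)
    (alpha : gT -> gT -> algC) :=
  (forall x, x \in G -> P x \in unitmx) /\
  (forall x y, x \in G -> y \in G -> P x *m P y = alpha x y *: P (x * y)%g).

Definition affords (N : {group gT}) (n : nat) (R : gT -> 'M[algC]_n)
    (chi : 'CF(N)) :=
  mx_repr N R /\ (forall x, x \in N -> chi x = \tr (R x)).

Definition char_triple (G N : {group gT}) (theta : 'CF(N)) :=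
  [/\ (N <| G)%g, theta \in irr N & (G \subset 'I[theta])%g].

Definition proj_repr_assoc (G N : {group gT}) (theta : 'CF(N)) (n : nat)
    (P : gT -> 'M[algC]_n) (alpha : gT -> gT -> algC) :=
  [/\ proj_repr G P alpha, affords P theta &
      forall x y, x \in G -> y \in N ->
        P (x * y)%g = P x *m P y /\ P (y * x)%g = P y *m P x].

Definition geq_c (G N : {group gT}) (theta : 'CF(N)) (H M : {group gT})
    (phi : 'CF(M)) (n m : nat) (P : gT -> 'M[algC]_n) (P' : gT -> 'M[algC]_m) :=
  [/\ char_triple G theta, char_triple H phi,
      [/\ (N * H)%g = G :> {set gT}, M :=: N :&: H & ('C_G(N) \subset H)%g] &
      exists alpha alpha' : gT -> gT -> algC,
        [/\ proj_repr_assoc G theta P alpha, proj_repr_assoc H phi P' alpha',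
            (forall x y, x \in H -> y \in H -> alpha x y = alpha' x y) &
            forall c, c \in ('C_G(N))%g ->
              exists a : algC, P c = a%:M /\ P' c = a%:M]].

Definition irr_over (J N : {group gT}) (theta : 'CF(N)) (psi : 'CF(J)) :=
  psi \in irr J /\ '['Res[N] psi, theta] != 0.

Definition proj_irr (J : {set gT}) (q : nat) (Q : gT -> 'M[algC]_q) :=
  (0 < q)%N /\
  forall U : 'M[algC]_q, (forall x, x \in J -> (U *m Q x <= U)%MS) ->
    U = 0 \/ row_full U.

End CharTriples.

(* Write K = I_G(psi) and X = P ⊗ Q, a representation of J affording psi.
   For r in K, X and its conjugate j |-> X(j^r) both afford psi, so some S
   intertwines them; twisted by P(r)^-1, S centralises P(N) ⊗ 1, hence by
   Schur S = P(r) ⊗ T_r.  Along a transversal of J in K, the matrices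
   R(rj) = (P(r) ⊗ T_r) X(j) then form a projective representation of K that
   extends X and has the shape P ⊗ Q^, with Q^ a projective extension of Q.
   The correspondent R' = P' ⊗ Q^ on I_H(psi) has the same factor set as R,
   since the factor sets of P and P' agree on H, and it extends
   Y = P' ⊗ Q on J ∩ H, which affords sigma_J(psi).  As J = (J ∩ H) N, a
   matrix commuting with Y is 1 ⊗ B with B commuting with Q, hence scalar,
   so sigma_J(psi) is irreducible.  On C_K(J), R is scalar by Schur, and R'
   is the same scalar because P and P' agree on C_G(N). *)

From HB Require Import structures.
From mathcomp Require Import all_boot all_order all_algebra all_fingroup all_solvable.
From mathcomp Require Import all_field all_character.
From mathcomp Require Import inertia mxtens.
From Stdlib Require Import IndefiniteDescription.
Import GRing.Theory Num.Theory.

Set Implicit Arguments.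
Unset Strict Implicit.
Unset Printing Implicit Defensive.

Local Open Scope group_scope.
Local Open Scope ring_scope.

Section TensorProduct.
Variable R : comPzRingType.

Lemma tensmx_eqP m n p q (A B : 'M[R]_(m * n, p * q)) :
  (forall i k j l, A (mxtens_index (i, k)) (mxtens_index (j, l)) =
                   B (mxtens_index (i, k)) (mxtens_index (j, l))) -> A = B.
Proof.
move=> eqAB; apply/matrixP => s t.
by case: (mxtens_indexP s) => i k; case: (mxtens_indexP t) => j l; apply: eqAB.
Qed.

Lemma tensmx_scalar m n (a b : R) : (a%:M : 'M_m) *t (b%:M : 'M_n) = (a * b)%:M.
Proof.
apply: tensmx_eqP => i k j l; rewrite tensmxE !mxE (can_eq (@mxtens_indexK m n)).
by rewrite xpair_eqE mulrnAr mulrnAl -mulrnA mulnb.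
Qed.

Lemma tensmx11 m n : (1%:M : 'M[R]_m) *t (1%:M : 'M[R]_n) = 1%:M.
Proof. by rewrite tensmx_scalar mulr1. Qed.

Lemma tensmxZl m n p q a (A : 'M[R]_(m, n)) (B : 'M[R]_(p, q)) :
  (a *: A) *t B = a *: (A *t B).
Proof. by apply: tensmx_eqP => i k j l; rewrite [LHS]tensmxE [RHS]mxE tensmxE mxE mulrA. Qed.

Lemma tensmxZr m n p q a (A : 'M[R]_(m, n)) (B : 'M[R]_(p, q)) :
  A *t (a *: B) = a *: (A *t B).
Proof. by apply: tensmx_eqP => i k j l; rewrite [LHS]tensmxE [RHS]mxE tensmxE mxE mulrCA. Qed.

Lemma tensmx_suml (I : Type) (r : seq I) (P : pred I) m n p q
    (A : I -> 'M[R]_(m, n)) (B : 'M[R]_(p, q)) :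
  (\sum_(i <- r | P i) A i) *t B = \sum_(i <- r | P i) (A i *t B).
Proof.
elim/big_rec2: _ => [|i C D _ <-]; first by rewrite tens0mx.
by apply: tensmx_eqP => i' k j l; rewrite [LHS]tensmxE [RHS]mxE !tensmxE mxE mulrDl.
Qed.

Lemma sum_tensmx_index m n (F : 'I_(m * n) -> R) :
  \sum_(s < m * n) F s = \sum_(i < m) \sum_(k < n) F (mxtens_index (i, k)).
Proof.
rewrite pair_big /= (reindex (@mxtens_index m n)) /=; last first.
  by exists (@mxtens_unindex m n) => s _; rewrite (mxtens_indexK, mxtens_unindexK).
by apply: eq_bigr => -[i k].
Qed.

Lemma sum_mul_delta m (F : 'I_m -> R) l : \sum_(c < m) F c * (c == l)%:R = F l.
Proof.
under eq_bigr do rewrite mulr_natr mulrb.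
by rewrite -big_mkcond big_pred1_eq.
Qed.

Lemma mul_tensmx1E p m q (W : 'M[R]_(p, m * q)) (A : 'M[R]_m) i j l :
  (W *m (A *t 1%:M)) i (mxtens_index (j, l))
    = \sum_(c < m) W i (mxtens_index (c, l)) * A c j.
Proof.
rewrite mxE sum_tensmx_index; apply: eq_bigr => c _.
under eq_bigr do rewrite tensmxE mxE mulrA.
by rewrite sum_mul_delta.
Qed.

Lemma tensmx1_mulE p m q (W : 'M[R]_(m * q, p)) (A : 'M[R]_m) i k j :
  ((A *t 1%:M) *m W) (mxtens_index (i, k)) j
    = \sum_(c < m) A i c * W (mxtens_index (c, k)) j.
Proof.
rewrite mxE sum_tensmx_index; apply: eq_bigr => c _.
under eq_bigr do rewrite tensmxE mxE mulrAC eq_sym.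
by rewrite sum_mul_delta.
Qed.

Lemma cent_tensmx1 m q (W : 'M[R]_(m * q)) : (0 < m)%N ->
  (forall A : 'M[R]_m, W *m (A *t 1%:M) = (A *t 1%:M) *m W) ->
  exists T : 'M[R]_q, W = 1%:M *t T.
Proof.
move=> m_gt0 cW; pose i0 := Ordinal m_gt0.
have blockW i k a j l : W (mxtens_index (i, k)) (mxtens_index (a, l))
    = (i == a)%:R * W (mxtens_index (j, k)) (mxtens_index (j, l)).
  have := congr1 (fun B : 'M[R]_(m * q) => B (mxtens_index (i, k)) (mxtens_index (j, l)))
                 (cW (delta_mx a j)).
  rewrite /= mul_tensmx1E tensmx1_mulE.
  under eq_bigr do rewrite mxE eqxx andbT.
  under [in RHS]eq_bigr do rewrite mxE -mulnb natrM mulrAC.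
  by rewrite !sum_mul_delta.
exists (\matrix_(k, l) W (mxtens_index (i0, k)) (mxtens_index (i0, l))).
by apply: tensmx_eqP => i k j l; rewrite tensmxE !mxE (blockW _ _ _ i0).
Qed.

End TensorProduct.

Section TensorProductField.
Variable F : fieldType.

Lemma unitmx_neq0 n (A : 'M[F]_n) : (0 < n)%N -> A \in unitmx -> A != 0.
Proof.
by case: n A => // n A _; apply: contraTneq => ->; rewrite unitmxE det0 unitr0.
Qed.

Lemma scalemx_fixed_eq1 m n a (A : 'M[F]_(m, n)) : A != 0 -> a *: A = A -> a = 1.
Proof.
move=> nzA /eqP; rewrite -subr_eq0 -{2}[A]scale1r -scalerBl scalemx_eq0.
by rewrite (negbTE nzA) orbF subr_eq0 => /eqP.
Qed.

Lemma tensmxI m n p q (A : 'M[F]_(m, n)) :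
  A != 0 -> injective (fun B : 'M[F]_(p, q) => A *t B).
Proof.
move=> /matrix0Pn[i [j nzAij]] B C /= eqABC; apply/matrixP => k l.
have := congr1 (fun D : 'M[F]_(m * p, n * q) =>
                  D (mxtens_index (i, k)) (mxtens_index (j, l))) eqABC.
by rewrite /= !tensmxE => /(mulfI nzAij).
Qed.

Lemma tensmx_unitr m n (A : 'M[F]_m) (B : 'M[F]_n) :
  (0 < m)%N -> A *t B \in unitmx -> B \in unitmx.
Proof.
move=> m_gt0; rewrite tensmx_decr unitmx_mul => /andP[_ uB1].
have cV (C : 'M[F]_m) : invmx (1%:M *t B) *m (C *t 1%:M) = (C *t 1%:M) *m invmx (1%:M *t B).
  have cB1 : (1%:M *t B) *m (C *t 1%:M) = (C *t 1%:M) *m (1%:M *t B).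
    by rewrite !tensmx_mul !mul1mx !mulmx1.
  by rewrite -[LHS](mulmxK uB1) -(mulmxA _ (C *t 1%:M)) -cB1 !mulmxA mulVmx // mul1mx.
have [T defV] := cent_tensmx1 m_gt0 cV.
have : 1%:M *t (B *m T) = 1%:M *t 1%:M :> 'M[F]_(m * n).
  by rewrite -[1%:M in LHS]mulmx1 -tensmx_mul -defV mulmxV // tensmx11.
by move/(tensmxI (unitmx_neq0 m_gt0 (unitmx1 _ _))) => /mulmx1_unit[].
Qed.

End TensorProductField.

Section IrreducibleRepresentations.
Variable gT : finGroupType.

Lemma proj_irr_cent_scalar (J : {set gT}) q (Q : gT -> 'M[algC]_q) (B : 'M[algC]_q) :
  proj_irr J Q -> (forall x, x \in J -> B *m Q x = Q x *m B) ->
  exists a, B = a%:M.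
Proof.
move=> [q_gt0 irrQ] cBQ.
have [a eig_a] : exists a, root (char_poly B) a.
  by apply/closed_rootP; rewrite size_char_poly; case: q q_gt0 {irrQ cBQ Q B}.
exists a; set U := kermx (B - a%:M).
have modU x : x \in J -> (U *m Q x <= U)%MS.
  move=> Jx; rewrite sub_kermx -mulmxA.
  have -> : Q x *m (B - a%:M) = (B - a%:M) *m Q x.
    by rewrite mulmxBr mulmxBl cBQ // scalar_mxC.
  by rewrite mulmxA (sub_kermxP (submx_refl U)) mul0mx.
case: (irrQ U modU) => [U0 | fullU].
  by move: eig_a; rewrite -eigenvalue_root_char /eigenvalue /eigenspace -/U U0 eqxx.
by apply/eqP; rewrite -subr_eq0; move: fullU; rewrite -sub1mx sub_kermx mul1mx.
Qed.

(* By Maschke a submodule has an invariant complement, and the projection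
   along it, being scalar, is the identity. *)
Lemma cent_scalar_mx_irr (A : {group gT}) k (rA : mx_representation algC A k) :
  (0 < k)%N -> (forall C, centgmx rA C -> exists a, C = a%:M) -> mx_irreducible rA.
Proof.
move=> k_gt0 centA; apply/mx_irrP; split=> // U modU nzU.
have [W modW defUW dxUW] := mx_Maschke_pchar rA (algC'G_pchar _) modU (submx1 U).
have dx := mxdirect_addsP dxUW.
have [a def_pi] : exists a, proj_mx U W = a%:M.
  by apply: centA; rewrite -row_full_dom_hom -sub1mx -defUW proj_mx_hom.
have a1 : a = 1.
  have := proj_mx_id dx (submx_refl U); rewrite def_pi mul_mx_scalar.
  exact: scalemx_fixed_eq1.
have W0 : W = 0 by have := proj_mx_0 dx (submx_refl W); rewrite def_pi a1 mulmx1.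
by rewrite -sub1mx -defUW addsmx_sub submx_refl W0 sub0mx.
Qed.

Lemma eq_affords (A : {group gT}) k (r r' : gT -> 'M[algC]_k) (chi : 'CF(A)) :
  {in A, r =1 r'} -> affords r chi -> affords r' chi.
Proof.
move=> eq_r [[r1 rM] chi_r]; split; last by move=> x Ax; rewrite -eq_r ?chi_r.
split=> [|x y Ax Ay]; first by rewrite -eq_r.
by rewrite -!eq_r ?groupM ?rM.
Qed.

Lemma afforded_cfRepr (A : {group gT}) k (r : gT -> 'M[algC]_k) (chi : 'CF(A))
    (r_chi : affords r chi) :
  chi = cfRepr (MxRepresentation (proj1 r_chi)).
Proof.
apply/cfunP => x; rewrite cfunE /=; have chi_r := proj2 r_chi.
by have [Ax | A'x] := boolP (x \in A); [rewrite mulr1n chi_r | rewrite mulr0n cfun0].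
Qed.

Lemma cent_scalar_afforded_irr (A : {group gT}) k (r : gT -> 'M[algC]_k)
    (chi : 'CF(A)) :
  affords r chi -> (0 < k)%N ->
  (forall C, (forall x, x \in A -> C *m r x = r x *m C) -> exists a, C = a%:M) ->
  chi \in irr A.
Proof.
move=> r_chi k_gt0 centA; apply/irr_reprP.
exists (Representation (MxRepresentation (proj1 r_chi))); last exact: afforded_cfRepr.
by apply: cent_scalar_mx_irr => // C /centgmxP; apply: centA.
Qed.

Section AffordedIrreducible.
Variables (A : {group gT}) (k : nat) (r : gT -> 'M[algC]_k) (chi : 'CF(A)).
Hypotheses (r_chi : affords r chi) (chi_irr : chi \in irr A).

Let rA := MxRepresentation (proj1 r_chi).

Lemma afforded_abs_irr : mx_absolutely_irreducible rA.
Proof.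
have [rG irrG def_chi] := irr_reprP chi_irr.
have sim : mx_rsim rG rA by apply: cfRepr_inj; rewrite -def_chi -afforded_cfRepr.
exact: (groupC (mx_rsim_irr sim irrG)).
Qed.

Lemma afforded_dim_gt0 : (0 < k)%N.
Proof. by case/mx_abs_irrP: afforded_abs_irr. Qed.

Lemma afforded_cent_scalar (Z : 'M[algC]_k) :
  (forall x, x \in A -> Z *m r x = r x *m Z) -> exists a, Z = a%:M.
Proof.
move=> cZ; have /is_scalar_mxP[a ->] : is_scalar_mx Z.
  by apply: (mx_abs_irr_cent_scalar afforded_abs_irr); apply/centgmxP.
by exists a.
Qed.

(* Absolute irreducibility: the r x span all of 'M_k. *)
Lemma afforded_cent_tensmx1 q (W : 'M[algC]_(k * q)) :
  (forall x, x \in A -> W *m (r x *t 1%:M) = (r x *t 1%:M) *m W) ->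
  exists T : 'M[algC]_q, W = 1%:M *t T.
Proof.
move=> cW; have /mx_abs_irrP[k_gt0 [c def_B]] := afforded_abs_irr.
apply: cent_tensmx1 => // B; rewrite [B]def_B tensmx_suml mulmx_suml mulmx_sumr.
by apply: eq_bigr => x Ax; rewrite tensmxZl -scalemxAl -scalemxAr cW.
Qed.

End AffordedIrreducible.

Lemma assoc_sub_Inertia (K N : {group gT}) (chi : 'CF(N)) k (R : gT -> 'M[algC]_k)
    (alpha : gT -> gT -> algC) :
  proj_repr_assoc K chi R alpha -> K \subset 'N(N) -> K \subset 'I[chi].
Proof.
move=> [[R_unit _] [_ chi_R] R_assoc] nNK; apply/subsetP => h Kh.
have nNh := subsetP nNK h Kh; rewrite inE nNh; apply/eqP/cfunP => x.
rewrite cfConjgE //; have [Nx | N'x] := boolP (x \in N); last first.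
  by rewrite !cfun0 ?memJ_norm ?groupV.
have Nxh : (x ^ h^-1)%g \in N by rewrite memJ_norm ?groupV.
have def_Rxh : R (x ^ h^-1)%g = R h *m R x *m invmx (R h).
  by rewrite -(R_assoc _ _ Kh Nx).1 conjgCV (R_assoc _ _ Kh Nxh).2 mulmxK ?R_unit.
by rewrite !chi_R // def_Rxh mxtrace_mulC mulmxA mulVmx ?R_unit // mul1mx.
Qed.

End IrreducibleRepresentations.

Section InertiaExtension.
Variables (gT : finGroupType) (G N J : {group gT}) (theta : 'CF(N)) (psi : 'CF(J)).
Variables (n q : nat) (P : gT -> 'M[algC]_n) (Q : gT -> 'M[algC]_q).
Variable alpha : gT -> gT -> algC.
Hypotheses (nsNG : N <| G) (sNJ : N \subset J) (sJG : J \subset G).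
Hypotheses (theta_irr : theta \in irr N) (psi_irr : psi \in irr J).
Hypothesis P_unit : forall x, x \in G -> P x \in unitmx.
Hypothesis P_mul : forall x y, x \in G -> y \in G -> P x *m P y = alpha x y *: P (x * y).
Hypothesis P_theta : affords P theta.
Hypothesis P_assoc : forall x y, x \in G -> y \in N ->
  P (x * y) = P x *m P y /\ P (y * x) = P y *m P x.
Hypothesis Q_modN : forall x y, x \in J -> y \in N -> Q (x * y) = Q x.

Local Notation X := (fun x => P x *t Q x).
Hypothesis X_psi : affords X psi.
Local Notation K := 'I_G[psi]%G.

Let n_gt0 : (0 < n)%N. Proof. exact: afforded_dim_gt0 P_theta theta_irr. Qed.

Let q_gt0 : (0 < q)%N.
Proof. by have := afforded_dim_gt0 X_psi psi_irr; rewrite muln_gt0 => /andP[]. Qed.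

Let P1 : P 1 = 1%:M. Proof. by case: P_theta => -[]. Qed.

Let X_mul : {in J &, {morph X : x y / (x * y)%g >-> x *m y}}.
Proof. by case: X_psi => -[]. Qed.

Let X_unit x : x \in J -> X x \in unitmx.
Proof. exact: (repr_mx_unit (MxRepresentation (proj1 X_psi))). Qed.

Let Q1 : Q 1 = 1%:M.
Proof.
apply: (tensmxI (unitmx_neq0 n_gt0 (unitmx1 _ n))).
by case: X_psi => -[X1 _] _; rewrite /= P1 in X1; rewrite X1 tensmx11.
Qed.

Let Q_N y : y \in N -> Q y = 1%:M.
Proof. by move=> Ny; rewrite -(mul1g y) Q_modN // Q1. Qed.

Let X_N y : y \in N -> X y = P y *t 1%:M.
Proof. by move=> Ny; rewrite /= Q_N. Qed.

Let P_conj r y : r \in G -> y \in N -> P r *m P (y ^ r)%g = P y *m P r.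
Proof.
move=> Gr Ny; have Nyr : (y ^ r)%g \in N by rewrite memJ_norm ?(subsetP (normal_norm nsNG)).
by rewrite -(P_assoc Gr Nyr).1 -(P_assoc Gr Ny).2 -conjgC.
Qed.

Let sJK : J \subset K. Proof. exact: sub_Inertia. Qed.

Definition conj_intertwiner r (S : 'M[algC]_(n * q)) :=
  S \in unitmx /\ forall j, j \in J -> S *m X (j ^ r)%g = X j *m S.

Lemma exists_intertwiner r : r \in K ->
  exists T : 'M[algC]_q, conj_intertwiner r (P r *t T).
Proof.
case/setIP=> Gr Ir; have nJr := subsetP (norm_inertia psi) r Ir.
have Xr_psi : affords (fun j => X (j ^ r)%g) psi.
  split=> [|j Jj]; last by rewrite -(inertia_valJ _ Ir) (proj2 X_psi) ?memJ_norm.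
  split=> [|x y Jx Jy]; first by rewrite /= conj1g; case: X_psi => -[].
  by rewrite /= conjMg X_mul ?memJ_norm.
have [S _ S_free S_X] : mx_rsim (MxRepresentation (proj1 X_psi))
                                (MxRepresentation (proj1 Xr_psi)).
  by apply: cfRepr_inj; rewrite -!afforded_cfRepr.
have {}S_X j : j \in J -> S *m X (j ^ r)%g = X j *m S by move/S_X/esym.
have S_unit : S \in unitmx by rewrite -row_free_unit.
(* S conjugates P(N) ⊗ 1 exactly as P(r) ⊗ 1 does. *)
pose W := S *m (invmx (P r) *t 1%:M).
have cW y : y \in N -> W *m (P y *t 1%:M) = (P y *t 1%:M) *m W.
  move=> Ny; have Nyr : (y ^ r)%g \in N by rewrite memJ_norm ?(subsetP (normal_norm nsNG)).
  have Pyr : (invmx (P r) *t 1%:M) *m (P y *t 1%:M)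
             = (P (y ^ r)%g *t 1%:M) *m (invmx (P r) *t 1%:M) :> 'M_(n * q).
    rewrite !tensmx_mul !mulmx1; congr (_ *t _).
    by rewrite -[RHS](mulKmx (P_unit Gr)) [P r *m _]mulmxA P_conj // mulmxK ?P_unit.
  by rewrite -mulmxA Pyr mulmxA -X_N // S_X ?(subsetP sNJ) // X_N // mulmxA.
have [T def_W] := afforded_cent_tensmx1 P_theta theta_irr cW.
have def_S : S = P r *t T.
  have Pr_inv : (invmx (P r) *t 1%:M) *m (P r *t 1%:M) = 1%:M :> 'M_(n * q).
    by rewrite tensmx_mul mulVmx ?P_unit // mulmx1 tensmx11.
  by rewrite -[S]mulmx1 -Pr_inv mulmxA -/W def_W tensmx_mul mul1mx mulmx1.
by exists T; rewrite -def_S; split.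
Qed.

Lemma exists_intertwiners : exists T : gT -> 'M[algC]_q,
  T 1%g = 1%:M /\ forall r, r \in K -> conj_intertwiner r (P r *t T r).
Proof.
have [T T_K] : exists T : gT -> 'M[algC]_q,
    forall r, r \in K -> conj_intertwiner r (P r *t T r).
  apply: (functional_choice
            (fun r (T : 'M_q) => r \in K -> conj_intertwiner r (P r *t T))) => r.
  by have [/exists_intertwiner[T ?] | _] := boolP (r \in K); [exists T | exists 0].
exists (fun r => if r == 1%g then 1%:M else T r); split=> [|r]; first by rewrite eqxx.
have [-> _ | _] := eqVneq r 1%g; last exact: T_K.
rewrite P1 tensmx11; split=> [|j _]; first exact: unitmx1.
by rewrite conjg1 mul1mx mulmx1.
Qed.

Section Extension.
Variable T : gT -> 'M[algC]_q.
Hypothesis T1 : T 1%g = 1%:M.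
Hypothesis T_intertwines : forall r, r \in K -> conj_intertwiner r (P r *t T r).

Definition crep x := repr (x *: J)%g.
Definition cpart x := ((crep x)^-1 * x)%g.
Definition ext x := (P (crep x) *t T (crep x)) *m X (cpart x).
Definition extQ x := alpha (crep x) (cpart x) *: (T (crep x) *m Q (cpart x)).
(* The scalar relating ext x *m ext y to ext (x * y) (see ext_mul), read off
   the trace. *)
Definition ext_cocycle x y :=
  \tr (ext x *m ext y *m invmx (ext (x * y)%g)) / (n * q)%:R.

Lemma crepP x : x \in K -> crep x \in K /\ cpart x \in J.
Proof.
move=> Kx; have : crep x \in (x *: J)%g := mem_repr _ (lcoset_refl J x).
rewrite mem_lcoset => Jr; split; last by rewrite /cpart -[x in (_ * x)%g]invgK -invMg groupV.
by rewrite -(mulKVg x (crep x)) groupM // (subsetP sJK).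
Qed.

Lemma crep_cpartK x : (crep x * cpart x)%g = x.
Proof. exact: mulKVg. Qed.

Lemma crep_mulr x j : j \in J -> crep (x * j)%g = crep x.
Proof. by move=> Jj; rewrite /crep lcosetM lcoset_id. Qed.

Lemma cpart_mulr x j : j \in J -> cpart (x * j)%g = (cpart x * j)%g.
Proof. by move=> Jj; rewrite /cpart crep_mulr // mulgA. Qed.

Lemma crep_id j : j \in J -> crep j = 1%g.
Proof. by move=> Jj; rewrite /crep lcoset_id // repr_group. Qed.

Lemma cpart_id j : j \in J -> cpart j = j.
Proof. by move=> Jj; rewrite /cpart crep_id // invg1 mul1g. Qed.

Lemma ext_tens x : x \in K -> ext x = P x *t extQ x.
Proof.
move=> Kx; have [Kr Ju] := crepP Kx; have Gr := subsetP (Inertia_sub G psi) _ Kr.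
rewrite /ext tensmx_mul (P_mul Gr (subsetP sJG _ Ju)) crep_cpartK.
by rewrite tensmxZl -tensmxZr.
Qed.

Lemma ext_id j : j \in J -> ext j = X j.
Proof. by move=> Jj; rewrite /ext cpart_id // crep_id // T1 P1 tensmx11 mul1mx. Qed.

Lemma ext_unit x : x \in K -> ext x \in unitmx.
Proof.
by move=> /crepP[Kr Ju]; rewrite unitmx_mul X_unit // andbT; case: (T_intertwines Kr).
Qed.

Lemma ext_conj x j : x \in K -> j \in J -> ext x *m X (j ^ x)%g = X j *m ext x.
Proof.
move=> Kx Jj; have [Kr Ju] := crepP Kx; have [_ S_X] := T_intertwines Kr.
have nJ z : z \in K -> z \in 'N(J) := subsetP (norm_Inertia G psi) z.
have Jjx : (j ^ x)%g \in J by rewrite memJ_norm ?nJ.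
have Jjr : (j ^ crep x)%g \in J by rewrite memJ_norm ?nJ.
have cpart_conj : (cpart x * j ^ x = j ^ crep x * cpart x)%g.
  by rewrite -[in (j ^ x)%g](crep_cpartK x) conjgM -conjgC.
by rewrite /ext -mulmxA -X_mul // cpart_conj X_mul // !mulmxA S_X.
Qed.

Lemma ext_mulr x j : x \in K -> j \in J -> ext (x * j)%g = ext x *m X j.
Proof.
move=> Kx Jj; have [_ Ju] := crepP Kx.
by rewrite /ext crep_mulr // cpart_mulr // X_mul // mulmxA.
Qed.

Lemma ext_mull x j : x \in K -> j \in J -> ext (j * x)%g = X j *m ext x.
Proof.
move=> Kx Jj; have nJx := subsetP (norm_Inertia G psi) x Kx.
by rewrite conjgC ext_mulr ?memJ_norm // ext_conj.
Qed.

Lemma ext_mul x y : x \in K -> y \in K ->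
  ext x *m ext y = ext_cocycle x y *: ext (x * y)%g.
Proof.
move=> Kx Ky; have Kxy := groupM Kx Ky.
pose Z := ext x *m ext y *m invmx (ext (x * y)%g).
have cZ j : j \in J -> Z *m X j = X j *m Z.
  move=> Jj; have nJ z : z \in K -> z \in 'N(J) := subsetP (norm_Inertia G psi) z.
  have Jjx : (j ^ x)%g \in J by rewrite memJ_norm ?nJ.
  have Jjxy : (j ^ (x * y))%g \in J by rewrite memJ_norm ?nJ.
  have inv_conj :
      invmx (ext (x * y)%g) *m X j = X (j ^ (x * y))%g *m invmx (ext (x * y)%g).
    rewrite -[RHS](mulKmx (ext_unit Kxy)) [ext _ *m (_ *m _)]mulmxA ext_conj //.
    by rewrite mulmxK ?ext_unit.
  have prod_conj : ext x *m ext y *m X (j ^ (x * y))%g = X j *m (ext x *m ext y).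
    by rewrite -mulmxA conjgM ext_conj // mulmxA ext_conj // mulmxA.
  by rewrite /Z -mulmxA inv_conj mulmxA prod_conj !mulmxA.
have [a def_Z] := afforded_cent_scalar X_psi psi_irr cZ.
have -> : ext_cocycle x y = a.
  rewrite /ext_cocycle -/Z def_Z mxtrace_scalar -[a *+ _]mulr_natr mulfK //.
  by rewrite pnatr_eq0 -lt0n muln_gt0 n_gt0 q_gt0.
by rewrite -mul_scalar_mx -def_Z mulmxKV ?ext_unit.
Qed.

Lemma ext_neq0 x : x \in K -> ext x != 0.
Proof. by move/ext_unit; apply: unitmx_neq0; rewrite muln_gt0 n_gt0 q_gt0. Qed.

Lemma ext_cocycle_idr x j : x \in K -> j \in J -> ext_cocycle x j = 1.
Proof.
move=> Kx Jj; have Kxj := groupM Kx (subsetP sJK j Jj).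
apply: (scalemx_fixed_eq1 (ext_neq0 Kxj)).
by rewrite -(ext_mul Kx (subsetP sJK j Jj)) (ext_id Jj) ext_mulr.
Qed.

Lemma ext_cocycle_idl x j : x \in K -> j \in J -> ext_cocycle j x = 1.
Proof.
move=> Kx Jj; have Kjx := groupM (subsetP sJK j Jj) Kx.
apply: (scalemx_fixed_eq1 (ext_neq0 Kjx)).
by rewrite -(ext_mul (subsetP sJK j Jj) Kx) (ext_id Jj) ext_mull.
Qed.

Lemma ext_assoc : proj_repr_assoc K psi ext ext_cocycle.
Proof.
split; first by split=> [|x y Kx Ky]; [apply: ext_unit | apply: ext_mul].
  by apply: eq_affords X_psi => j Jj; rewrite ext_id.
by move=> x j Kx Jj; rewrite ext_mulr // ext_mull // (ext_id Jj).
Qed.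

Lemma extQ_id j : j \in J -> extQ j = Q j.
Proof.
move=> Jj; apply: (tensmxI (unitmx_neq0 n_gt0 (P_unit (subsetP sJG j Jj)))).
by rewrite /= -ext_tens ?ext_id ?(subsetP sJK).
Qed.

Lemma extQ_unit x : x \in K -> extQ x \in unitmx.
Proof. by move=> Kx; have := ext_unit Kx; rewrite ext_tens //; apply: tensmx_unitr n_gt0. Qed.

Lemma extQ_mul x y : x \in K -> y \in K ->
  alpha x y *: (extQ x *m extQ y) = ext_cocycle x y *: extQ (x * y)%g.
Proof.
move=> Kx Ky; have sKG := subsetP (Inertia_sub G psi).
apply: (tensmxI (unitmx_neq0 n_gt0 (P_unit (sKG _ (groupM Kx Ky))))) => /=.
have := ext_mul Kx Ky; rewrite !ext_tens ?groupM // tensmx_mul P_mul ?sKG //.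
by rewrite !tensmxZr tensmxZl.
Qed.

Section Correspondent.
Variables (H M : {group gT}) (phi : 'CF(M)) (m : nat) (P' : gT -> 'M[algC]_m).
Variables (alpha' : gT -> gT -> algC) (chi : 'CF(J :&: H)).
Hypotheses (mulNH : (N * H)%g = G) (defM : M :=: N :&: H) (sCN_H : 'C_G(N) \subset H).
Hypothesis phi_irr : phi \in irr M.
Hypothesis P'_unit : forall x, x \in H -> P' x \in unitmx.
Hypothesis P'_mul : forall x y, x \in H -> y \in H ->
  P' x *m P' y = alpha' x y *: P' (x * y)%g.
Hypothesis P'_phi : affords P' phi.
Hypothesis alpha_eq : forall x y, x \in H -> y \in H -> alpha x y = alpha' x y.
Hypothesis cent_scalar : forall c, c \in 'C_G(N) -> exists a, P c = a%:M /\ P' c = a%:M.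
Hypothesis Q_irr : proj_irr J Q.

Local Notation Y := (fun x => P' x *t Q x).
Hypothesis Y_chi : affords Y chi.
Local Notation K' := 'I_H[psi]%G.

Definition ext' x := P' x *t extQ x.

Let m_gt0 : (0 < m)%N. Proof. exact: afforded_dim_gt0 P'_phi phi_irr. Qed.

Let sHG : H \subset G. Proof. by rewrite -mulNH mulG_subr. Qed.

Lemma K'_eq : K' :=: K :&: H.
Proof. by rewrite /= setIAC (setIidPr sHG). Qed.

Let sK'K : K' \subset K. Proof. by rewrite K'_eq subsetIl. Qed.

Let sK'H : K' \subset H. Proof. exact: subsetIl. Qed.

Lemma JK'_eq : J :&: K' = J :&: H.
Proof. by rewrite /= setICA (setIidPl (sub_inertia psi)) setIC. Qed.

Lemma sJH_K' : J :&: H \subset K'.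
Proof. by rewrite -JK'_eq subsetIr. Qed.

Lemma ext'_id j : j \in J :&: H -> ext' j = Y j.
Proof. by case/setIP=> Jj _; rewrite /ext' extQ_id. Qed.

Lemma ext'_mul x y : x \in K' -> y \in K' ->
  ext' x *m ext' y = ext_cocycle x y *: ext' (x * y)%g.
Proof.
move=> K'x K'y; have [Hx Hy] := (subsetP sK'H x K'x, subsetP sK'H y K'y).
rewrite /ext' tensmx_mul P'_mul // tensmxZl -tensmxZr -alpha_eq //.
by rewrite extQ_mul ?(subsetP sK'K) // tensmxZr.
Qed.

Lemma ext'_assoc : proj_repr_assoc K' chi ext' ext_cocycle.
Proof.
split.
- split=> [x K'x | x y K'x K'y]; last exact: ext'_mul.
  apply: tensmx_unit; rewrite -?lt0n ?m_gt0 ?q_gt0 ?P'_unit ?(subsetP sK'H) //.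
  exact/extQ_unit/(subsetP sK'K).
- by apply: eq_affords Y_chi => j JHj; rewrite ext'_id.
move=> x j K'x JHj; have /setIP[Jj _] := JHj; have K'j := subsetP sJH_K' j JHj.
have Kx := subsetP sK'K x K'x.
by rewrite !ext'_mul // ext_cocycle_idr // ext_cocycle_idl // !scale1r.
Qed.

Lemma Q_JH j : j \in J -> exists2 h, h \in J :&: H & Q j = Q h.
Proof.
move=> Jj; have : (j^-1)%g \in (N * H)%g by rewrite mulNH groupV (subsetP sJG).
case/mulsgP=> a b Na Hb def_j'; have def_j : j = (b^-1 * a^-1)%g.
  by rewrite -invMg -def_j' invgK.
have Jb' : (b^-1)%g \in J.
  by rewrite -(mulgKV a (b^-1)%g) -def_j groupM // (subsetP sNJ).
by exists (b^-1)%g; rewrite ?inE ?Jb' ?groupV // def_j Q_modN // groupV.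
Qed.

Lemma Y_cent_scalar (C : 'M[algC]_(m * q)) :
  (forall x, x \in J :&: H -> C *m Y x = Y x *m C) -> exists a, C = a%:M.
Proof.
move=> cCY; have sMN : M \subset N by rewrite defM subsetIl.
have sMJH : M \subset J :&: H by rewrite defM setSI.
have cCM y : y \in M -> C *m (P' y *t 1%:M) = (P' y *t 1%:M) *m C.
  by move=> My; have := cCY y (subsetP sMJH y My); rewrite /= Q_N ?(subsetP sMN).
have [B def_C] := afforded_cent_tensmx1 P'_phi phi_irr cCM.
have cBQ x : x \in J -> B *m Q x = Q x *m B.
  move=> Jx; have [h /setIP[Jh Hh] ->] := Q_JH Jx.
  apply: (tensmxI (unitmx_neq0 m_gt0 (P'_unit Hh))) => /=.
  have := cCY h; rewrite inE Jh Hh def_C !tensmx_mul mul1mx mulmx1; exact.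
have [a def_B] := proj_irr_cent_scalar Q_irr cBQ.
by exists a; rewrite def_C def_B tensmx_scalar mul1r.
Qed.

Lemma chi_irr : chi \in irr (J :&: H).
Proof.
apply: cent_scalar_afforded_irr Y_chi _ Y_cent_scalar.
by rewrite muln_gt0 m_gt0 q_gt0.
Qed.

Lemma K'_norm_JH : K' \subset 'N(J :&: H).
Proof.
by rewrite normsI ?(subset_trans sK'K (norm_Inertia G psi)) ?(subset_trans sK'H (normG H)).
Qed.

Lemma K'_char_triple : char_triple K' chi.
Proof.
split; first by rewrite /normal sJH_K' K'_norm_JH.
  exact: chi_irr.
exact: assoc_sub_Inertia ext'_assoc K'_norm_JH.
Qed.

Lemma mul_JK' : (J * K')%g = K.
Proof.
apply/eqP; rewrite eqEsubset mul_subG ?sJK ?sK'K //=.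
apply/subsetP=> x Kx; have : x \in (N * H)%g by rewrite mulNH (subsetP (Inertia_sub G psi)).
case/mulsgP=> a b Na Hb def_x; have Ja := subsetP sNJ a Na.
have Kb : b \in K.
  by rewrite -(mulKg a b) -def_x groupM // groupV (subsetP sJK).
by rewrite def_x mem_mulg // K'_eq inE Kb.
Qed.

Lemma sCK_CN : 'C_K(J) \subset 'C_G(N).
Proof. by rewrite setISS ?Inertia_sub ?centS. Qed.

Lemma sCK_K' : 'C_K(J) \subset K'.
Proof. by rewrite K'_eq subsetI subsetIl (subset_trans sCK_CN). Qed.

Lemma ext_cent_scalar c : c \in 'C_K(J) -> exists a, ext c = a%:M /\ ext' c = a%:M.
Proof.
move=> CKc; have /setIP[Kc cJc] := CKc.
have cXc j : j \in J -> ext c *m X j = X j *m ext c.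
  move=> Jj; have := ext_conj Kc Jj.
  by rewrite conjgE -(centP cJc j Jj) mulKg.
have [b def_b] := afforded_cent_scalar X_psi psi_irr cXc.
have [a [Pc P'c]] := cent_scalar (subsetP sCK_CN c CKc).
have nz_Pc := unitmx_neq0 n_gt0 (P_unit (subsetP (Inertia_sub G psi) c Kc)).
have nz_a : a != 0 by apply: contraNneq nz_Pc => a0; rewrite Pc a0 -scalemx1 scale0r.
have def_extQ : extQ c = (b / a)%:M.
  apply: (tensmxI nz_Pc) => /=.
  by rewrite -ext_tens // def_b Pc tensmx_scalar mulrC divfK.
by exists b; rewrite def_b /ext' P'c def_extQ tensmx_scalar mulrC divfK.
Qed.

Lemma inertia_geq_c : geq_c K psi K' chi ext ext'.
Proof.
split.
- by split; [apply: normal_Inertia | | apply: subsetIr].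
- exact: K'_char_triple.
- by split; [apply: mul_JK' | rewrite JK'_eq | apply: sCK_K'].
exists ext_cocycle, ext_cocycle; split=> //.
- exact: ext_assoc.
- exact: ext'_assoc.
exact: ext_cent_scalar.
Qed.

End Correspondent.
End Extension.

End InertiaExtension.

Theorem proposition2p2 (gT : finGroupType) (G N H M J : {group gT})
    (theta : 'CF(N)) (phi : 'CF(M)) (n m : nat)
    (P : gT -> 'M[algC]_n) (P' : gT -> 'M[algC]_m) :
  geq_c G theta H phi P P' ->
  N \subset J -> J \subset G ->
  forall psi : 'CF(J), irr_over theta psi ->
  forall (q : nat) (Q : gT -> 'M[algC]_q) (beta : gT -> gT -> algC),
    proj_repr J Q beta ->
    (forall x y, x \in J -> y \in J ->
       P x *m P y = (beta x y)^-1 *: P (x * y)%g) ->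
    (forall x y, x \in J -> y \in N -> Q (x * y)%g = Q x) ->
    proj_irr J Q ->
    affords (fun x => tensmx (P x) (Q x)) psi ->
  forall chi : 'CF(J :&: H),
    affords (fun x => tensmx (P' x) (Q x)) chi ->
  exists (k k' : nat) (R : gT -> 'M[algC]_k) (R' : gT -> 'M[algC]_k'),
    geq_c ('I_G[psi])%G psi ('I_H[psi])%G chi R R'.
Proof.
move=> [[nsNG theta_irr _] [_ phi_irr _] [mulNH defM sCN_H]
        [alpha [alpha' [[[P_unit P_mul] P_theta P_assoc] [[P'_unit P'_mul] P'_phi _]
                        alpha_eq cent_scalar]]]]
       sNJ sJG psi [psi_irr _] q Q beta _ _ Q_modN Q_irr X_psi chi Y_chi.
have [T [T1 T_intertwines]] :=
  exists_intertwiners nsNG sNJ theta_irr P_unit P_theta P_assoc Q_modN X_psi.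
do 4!eexists.
by apply: (inertia_geq_c sNJ sJG theta_irr psi_irr P_unit P_mul P_theta Q_modN X_psi
  T1 T_intertwines mulNH defM sCN_H phi_irr P'_unit P'_mul P'_phi alpha_eq
  cent_scalar Q_irr Y_chi).
Qed.
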